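(* Let $K:[0,\infty)\to[0,\infty)$ satisfy: (AK1) $K$ is non-increasing and strictly positive on $[0,\infty)$; (AK2) $K(0)=1$ and $c_K\int_{\mathbb{R}^d}K(\|\mathbf{x}\|)\,d\mathbf{x}=1$ for some constant $c_K>0$; (AK3) there exist $A,\alpha>0$ with $K(x)/K(y)\le A\exp(-(x-y)^\alpha)$ for all $0\le y\le x$. For $\sigma>0$ let $K_\sigma(x)=K(x/\sigma)$. Let $\mathcal{X}=\{\mathbf{x}_1,\dots,\mathbf{x}_n\}\subset\mathbb{R}^d$ and suppose there is a partition of $\mathcal{X}$ into nonempty sets $\mathcal{C}_1,\dots,\mathcal{C}_k$ such that $\min_{m\in[k]}d(\mathcal{C}_m,\mathcal{X}\setminus\mathcal{C}_m)-\max_{l\in[k]}\delta_l=\delta>0$, where $\mathcal{C}_l$ is connected at distance $\delta_l$ for each $l\in[k]$. Let $\mathbf{U}$ have as columns the eigenvectors of the unnormalised Laplacian of the graph $(\mathcal{X},K_\sigma)$. Then, provided $0<\sigma<\delta\log(An^{z/3})^{-1/\alpha}$, where $z$ satisfies $n^{z-15}\ge81k^{15}$, we have $$\max_{\substack{i,j\in[n],l\in[k]:\\\mathbf{x}_i,\mathbf{x}_j\in\mathcal{C}_l}}\|\mathbf{U}_{i,1:k}-\mathbf{U}_{j,1:k}\|\le\left(\frac{k^3}{n^{z-9}}\right)^{1/6},\qquad \min_{\substack{i,j\in[n],l\in[k]:\\\mathbf{x}_i\in\mathcal{C}_l,\mathbf{x}_j\notin\mathcal{C}_l}}\|\mathb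f{U}_{i,1:k}-\mathbf{U}_{j,1:k}\|\ge\sqrt{\frac{2}{n}}-6\left(\frac{k^{27}}{n^{z-15}}\right)^{1/24}.$$
   Context: $[n]=\{1,\dots,n\}$; $\|\cdot\|$ is the Euclidean norm. For sets $S,U$, $d(S,U)=\inf_{\mathbf{x}\in S,\mathbf{y}\in U}\|\mathbf{x}-\mathbf{y}\|$. A set $S$ is connected at distance $\delta$ if there is no partition of $S$ into $S_1,S_2$ with $d(S_1,S_2)>\delta$. The graph $(\mathcal{X},K_\sigma)$ has affinity matrix $\mathbf{A}_{ij}=K_\sigma(\|\mathbf{x}_i-\mathbf{x}_j\|)$ (including $i=j$), degree matrix $\mathbf{D}=\mathrm{diag}(\sum_j\mathbf{A}_{ij})$, unnormalised Laplacian $\mathbf{D}-\mathbf{A}$. ''The eigenvectors'' means an orthonormal eigenbasis arranged as columns with eigenvalues in nondecreasing order; $\mathbf{U}_{i,1:k}$ is the first $k$ entries of row $i$. *)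

From HB Require Import structures.
From mathcomp Require Import all_boot all_order all_algebra.
From mathcomp Require Import all_classical all_reals all_analysis.
Set Implicit Arguments. Unset Strict Implicit. Unset Printing Implicit Defensive.
Import Order.TTheory GRing.Theory Num.Theory.
Local Open Scope ring_scope.

Section Defs.
Variable R : realType.

Definition enorm (d : nat) (v : 'rV[R]_d) : R :=
  Num.sqrt (\sum_(i < d) (v ord0 i) ^+ 2).

(* Iterated Lebesgue integral over R^d (Tonelli order: last coordinate outermost)
   of a function of d real coordinates (coordinates i < d of a nat-indexed vector). *)
Fixpoint iter_integral (d : nat) (g : (nat -> R) -> \bar R) : \bar R :=
  match d with
  | 0 => g (fun _ => 0)
  | m.+1 => (\int[@lebesgue_measure R]_(t in [set: R])
               iter_integral m (fun v => g (fun i => if i == m then t else v i)))%E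
  end.

Definition radial_integral (d : nat) (K : R -> R) : \bar R :=
  iter_integral d (fun v => (K (enorm (\row_(i < d) v i)))%:E).

Definition AK1 (K : R -> R) : Prop :=
  (forall x y, 0 <= x -> x <= y -> K y <= K x) /\ (forall x, 0 <= x -> 0 < K x).
Definition AK2 (d : nat) (K : R -> R) : Prop :=
  K 0 = 1 /\ exists cK : R, 0 < cK /\ (cK%:E * radial_integral d K)%E = 1%E.
Definition AK3 (K : R -> R) (A alpha : R) : Prop :=
  0 < A /\ 0 < alpha /\
  forall x y, 0 <= y -> y <= x -> K x / K y <= A * expR (- ((x - y) `^ alpha)).

Variables (n d : nat) (x : 'I_n -> 'rV[R]_d).

(* d(S,U) = inf_{x in S, y in U} ||x - y|| for sets of indices of points;
   +oo when one of them is empty *)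
Definition set_dist (S U : {set 'I_n}) : \bar R :=
  ereal_inf [set (enorm (x i - x j))%:E | i in [set i | i \in S] & j in [set j | j \in U]].

Definition connected_at (S : {set 'I_n}) (delta : R) : Prop :=
  ~ exists S1 S2 : {set 'I_n},
      [/\ S1 != finset.set0, S2 != finset.set0, S1 :|: S2 = S, S1 :&: S2 = finset.set0
        & (delta%:E < set_dist S1 S2)%E].

Definition affinity (K : R -> R) (sigma : R) : 'M[R]_n :=
  \matrix_(i, j) K (enorm (x i - x j) / sigma).
Definition degree_mx (K : R -> R) (sigma : R) : 'M[R]_n :=
  diag_mx (\row_i \sum_j affinity K sigma i j).
Definition laplacian (K : R -> R) (sigma : R) : 'M[R]_n :=
  degree_mx K sigma - affinity K sigma.

Definition eigvec_matrix (L U : 'M[R]_n) : Prop :=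
  exists ev : 'rV[R]_n,
    [/\ U^T *m U = 1%:M, L *m U = U *m diag_mx ev
      & forall i j : 'I_n, (i <= j)%N -> ev ord0 i <= ev ord0 j].

Definition row_dist (U : 'M[R]_n) (k : nat) (i j : 'I_n) : R :=
  Num.sqrt (\sum_(c < n | (c < k)%N) (U i c - U j c) ^+ 2).

End Defs.

From HB Require Import structures.
From mathcomp Require Import all_boot all_order all_algebra.
From mathcomp Require Import all_classical all_reals all_analysis.
From mathcomp Require Import ring lra zify.
Set Implicit Arguments. Unset Strict Implicit. Unset Printing Implicit Defensive.
Import Order.TTheory GRing.Theory Num.Theory.
Local Open Scope ring_scope.

(* Write eps = n^(-z/3) and w = K_sigma(max_l delta_l).  By (AK3) and the bound
   on sigma, points in different clusters have affinity at most eps * w, while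
   by monotonicity pairs inside a cluster at distance at most its delta_l have
   affinity at least w.  A vector constant on the k clusters and orthogonal to
   the first k - 1 eigenvectors gives lambda_k <= n eps w (Courant-Fischer).
   Along such a short pair p, q every eigenvector u satisfies
   w (u p - u q)^2 <= lambda, and short pairs connect each cluster, so rows of
   the same cluster are at squared distance at most rho = k n^3 eps.
   For the separation, let V be the first k columns of U and X the matrix
   obtained by replacing each row of V by the row of a representative of its
   cluster.  Then X^T X - 1 = (X - V)^T X + V^T (X - V) has squared Frobenius
   norm at most 4 n^2 rho; since tr ((AB - 1)^2) = tr ((BA - 1)^2) this bounds
   the defects s_a <x_a, x_b> - [a = b], where x_a are the representative rows
   and s_a the cluster sizes.  When 4 n^2 rho <= 1/16 this forces
   |x_a - x_b|^2 >= 2/n; otherwise the claimed lower bound is nonpositive. *)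

Section RealSums.
Variable R : realFieldType.

Lemma cauchy_schwarz (I : finType) (a b : I -> R) :
  (\sum_i a i * b i) ^+ 2 <= (\sum_i a i ^+ 2) * (\sum_i b i ^+ 2).
Proof.
have expand : \sum_p \sum_q (a p * b q - a q * b p) ^+ 2 =
    \sum_p \sum_q a p ^+ 2 * b q ^+ 2 + \sum_p \sum_q a q ^+ 2 * b p ^+ 2
    - 2 * \sum_p \sum_q a p * b p * (a q * b q).
  rewrite -!big_split /= !mulr_sumr -sumrB; apply: eq_bigr => p _.
  rewrite -big_split /= !mulr_sumr -sumrB; apply: eq_bigr => q _; ring.
have : 0 <= \sum_p \sum_q (a p * b q - a q * b p) ^+ 2.
  by apply: sumr_ge0 => p _; apply: sumr_ge0 => q _; apply: sqr_ge0.
rewrite expand [X in _ + X - _]exchange_big /= -!big_distrlr /= -expr2; lra.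
Qed.

Lemma ler_term_double_sum (I J : finType) (T : I -> J -> R) p q :
  (forall i j, 0 <= T i j) -> T p q <= \sum_i \sum_j T i j.
Proof.
move=> T0; rewrite (bigD1 p) //= (bigD1 q) //= -addrA lerDl.
by rewrite addr_ge0 ?sumr_ge0 // => i _; apply: sumr_ge0.
Qed.

Lemma ler_pair_double_sum (I : finType) (T : I -> I -> R) p q :
  (forall i j, 0 <= T i j) -> p != q -> T p q + T q p <= \sum_i \sum_j T i j.
Proof.
move=> T0 pq; rewrite (bigD1 p) //= [\sum_(i | i != p) _](bigD1 q) 1?eq_sym //= addrA.
have row_le r s : T r s <= \sum_j T r j.
  by rewrite (bigD1 s) //= lerDl sumr_ge0.
rewrite -[T p q + T q p]addr0; apply: lerD; first exact: lerD.
by apply: sumr_ge0 => i _; apply: sumr_ge0.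
Qed.

Lemma sum_sqr_diff (I : finType) (f : I -> R) :
  \sum_p \sum_q (f p - f q) ^+ 2 = 2 * #|I|%:R * \sum_p f p ^+ 2 - 2 * (\sum_p f p) ^+ 2.
Proof.
have expand : \sum_p \sum_q (f p - f q) ^+ 2 =
    \sum_p \sum_(q : I) f p ^+ 2 + \sum_(p : I) \sum_q f q ^+ 2 - 2 * \sum_p \sum_q f p * f q.
  rewrite -!big_split /= !mulr_sumr -sumrB; apply: eq_bigr => p _.
  rewrite -big_split /= !mulr_sumr -sumrB; apply: eq_bigr => q _; ring.
rewrite expand [X in _ + X - _]exchange_big /= -big_distrlr /= -expr2.
under eq_bigr do rewrite sumr_const -mulr_natr.
by rewrite -mulr_suml; ring.
Qed.

End RealSums.

Section Frobenius.
Variable R : realFieldType.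

Definition frob {m p} (A : 'M[R]_(m, p)) : R := \sum_i \sum_j A i j ^+ 2.

Lemma frob_ge0 m p (A : 'M[R]_(m, p)) : 0 <= frob A.
Proof. by apply: sumr_ge0 => i _; apply: sumr_ge0 => j _; apply: sqr_ge0. Qed.

Lemma frob_trmx m p (A : 'M[R]_(m, p)) : frob A^T = frob A.
Proof.
by rewrite /frob exchange_big; apply: eq_bigr => i _; apply: eq_bigr => j _; rewrite mxE.
Qed.

Lemma ler_frob_mul m p r (A : 'M[R]_(m, p)) (B : 'M[R]_(p, r)) :
  frob (A *m B) <= frob A * frob B.
Proof.
rewrite /frob [X in _ <= _ * X]exchange_big /= big_distrlr /=.
apply: ler_sum => i _; apply: ler_sum => j _; rewrite mxE.
exact: cauchy_schwarz.
Qed.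

Lemma ler_frobD m p (A B : 'M[R]_(m, p)) : frob (A + B) <= 2 * (frob A + frob B).
Proof.
rewrite /frob -big_split /= mulr_sumr; apply: ler_sum => i _.
rewrite -big_split /= mulr_sumr; apply: ler_sum => j _; rewrite mxE.
have := sqr_ge0 (A i j - B i j); rewrite !expr2; nra.
Qed.

Lemma mxtrace_sqr_sym m (A : 'M[R]_m) : A^T = A -> \tr (A *m A) = frob A.
Proof.
move=> symA; apply: eq_bigr => i _; rewrite mxE; apply: eq_bigr => j _.
have -> : A j i = A i j by rewrite -[in LHS]symA mxE.
by rewrite expr2.
Qed.

End Frobenius.

Lemma mxtrace_sqr_sub1C (R : comPzRingType) m (A B : 'M[R]_m) :
  \tr ((A *m B - 1%:M) *m (A *m B - 1%:M)) = \tr ((B *m A - 1%:M) *m (B *m A - 1%:M)).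
Proof.
rewrite !mulmxBl !mulmxBr !mul1mx !mulmx1 !raddfB /= (mxtrace_mulC A B).
by rewrite !mulmxA [\tr (_ *m B)]mxtrace_mulC !mulmxA.
Qed.

Lemma exists_nonzero_left_kernel (F : fieldType) p q (B : 'M[F]_(p, q)) :
  (q < p)%N -> exists2 a : 'rV[F]_p, a != 0 & a *m B = 0.
Proof.
move=> hqp; have : kermx B != 0.
  rewrite kermx_eq0; apply: contraTN hqp => /eqP freeB.
  by rewrite -leqNgt -freeB rank_leq_col.
case/matrix0Pn => i [j nz]; set a := row i (kermx B).
exists a; last by rewrite -row_mul mulmx_ker row0.
by apply/rV0Pn; exists j; rewrite mxE.
Qed.

Lemma surj_card_le (T T' : finType) (f : T -> T') :
  (forall y, exists x, f x = y) -> (#|T'| <= #|T|)%N.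
Proof.
move=> f_surj; apply: leq_trans (leq_image_card f T).
by apply: subset_leq_card; apply/fintype.subsetP => y _; have [x <-] := f_surj y; exact: codom_f.
Qed.

Lemma connected_lipschitz_bound (R : realFieldType) (T : finType) (C : {set T})
    (E : T -> T -> Prop) (f : T -> R) (eta : R) :
  0 <= eta ->
  (forall S : {set T}, S \subset C -> S != finset.set0 -> S != C ->
     exists p q, [/\ p \in S, q \in C, q \notin S & E p q]) ->
  (forall p q, p \in C -> q \in C -> E p q -> `|f p - f q| <= eta) ->
  forall i j, i \in C -> j \in C -> `|f i - f j| <= (#|C|.-1)%:R * eta.
Proof.
move=> eta0 conn lipE i j iC jC.
pose S m := [set p in C | `|f p - f i| <= m%:R * eta].
(* Each step along an edge leaving S m lands in S m.+1, so S grows until it is C. *)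
have SC m : S m \subset C by apply/fintype.subsetP => p; rewrite inE => /andP[].
have iS m : i \in S m by rewrite inE iC subrr normr0 mulr_ge0.
have Smono m : S m \subset S m.+1.
  apply/fintype.subsetP => r; rewrite !inE => /andP[-> h] /=.
  by apply: le_trans h _; rewrite ler_wpM2r // ler_nat.
have S_grows m : (minn m.+1 #|C| <= #|S m|)%N.
  elim: m => [|m IH].
    by rewrite (leq_trans (geq_minl _ _)) // card_gt0; apply/set0Pn; exists i.
  have [SmC|SmC] := eqVneq (S m) C.
    by rewrite (leq_trans (geq_minr _ _)) // -{1}SmC subset_leq_card.
  have Sm0 : S m != finset.set0 by apply/set0Pn; exists i.
  have [p [q [pS qC qS Epq]]] := conn _ (SC m) Sm0 SmC.
  have qS1 : q \in S m.+1.
    move: pS; rewrite !inE qC => /andP[pC hp] /=.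
    have := lipE _ _ pC qC Epq; rewrite distrC => hpq.
    have tri : `|f q - f i| <= `|f q - f p| + `|f p - f i|.
      by rewrite -[f q - f i](subrKA (f p)) ler_normD.
    rewrite -addn1 natrD mulrDl mul1r; lra.
  have : S m \proper S m.+1 by rewrite properE Smono /=; apply/fintype.subsetPn; exists q.
  by move/proper_card; move: IH; lia.
have C0 : (0 < #|C|)%N by rewrite card_gt0; apply/set0Pn; exists i.
have : S #|C|.-1 = C by apply/eqP; rewrite eqEcard SC -{1}(minnn #|C|) -{1}(prednK C0) S_grows.
by move/setP/(_ j); rewrite inE jC distrC => /andP[].
Qed.

Section Connectivity.
Variables (R : realType) (n d : nat) (x : 'I_n -> 'rV[R]_d).

Lemma enorm_ge0 (v : 'rV[R]_d) : 0 <= enorm v.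
Proof. exact: sqrtr_ge0. Qed.

Lemma enorm_distC p q : enorm (x p - x q) = enorm (x q - x p).
Proof.
by congr Num.sqrt; apply: eq_bigr => i _; rewrite !mxE -opprB sqrrN.
Qed.

Lemma set_dist_le_enorm (S1 S2 : {set 'I_n}) p q : p \in S1 -> q \in S2 ->
  (set_dist x S1 S2 <= (enorm (x p - x q))%:E)%E.
Proof. by move=> pS qS; apply: ereal_inf_lbound; exists p; rewrite /= ?inE //; exists q. Qed.

Lemma lt_set_dist (S1 S2 : {set 'I_n}) (e : R) :
  (forall p q, p \in S1 -> q \in S2 -> e < enorm (x p - x q)) ->
  (e%:E < set_dist x S1 S2)%E.
Proof.
move=> gt_e.
pose M := (\big[Order.min/+oo]_(p | p \in S1)
             \big[Order.min/+oo]_(q | q \in S2) (enorm (x p - x q))%:E)%E.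
have eM : (e%:E < M)%E.
  apply: lt_bigmin => [|p pS]; first exact: ltry.
  by apply: lt_bigmin => [|q qS]; [exact: ltry | rewrite lte_fin gt_e].
apply: (lt_le_trans eM); apply: le_ereal_inf_tmp => _ [p /= pS [q /= qS <-]].
by apply: le_trans (bigmin_le_cond _ _ pS) _; apply: bigmin_le_cond.
Qed.

Lemma connected_at_edge (C : {set 'I_n}) (dl : R) : connected_at x C dl ->
  forall S : {set 'I_n}, S \subset C -> S != finset.set0 -> S != C ->
    exists p q, [/\ p \in S, q \in C, q \notin S & enorm (x p - x q) <= dl].
Proof.
move=> connC S SC S0 SnC; apply: contrapT => no_edge; apply: connC.
exists S, (C :\: S); split => //.
- have /properP[_ [q qC qS]] : S \proper C by rewrite finset.properEneq SnC.
  by apply/set0Pn; exists q; rewrite inE qS.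
- apply/setP => r; rewrite !inE.
  by case: (boolP (r \in S)) => [/(fintype.subsetP SC) ->|].
- by apply/setP => r; rewrite !inE; case: (r \in S).
apply: lt_set_dist => p q pS; rewrite inE => /andP[qS qC].
by rewrite ltNge; apply/negP => le_dl; apply: no_edge; exists p, q.
Qed.

Lemma connected_at_ge0 (C : {set 'I_n}) (dl : R) p q :
  connected_at x C dl -> p \in C -> q \in C -> p != q -> 0 <= dl.
Proof.
move=> connC pC qC pq.
have [|||p' [q' [_ _ _ le_dl]]] := @connected_at_edge C dl connC [set p].
- by rewrite finset.sub1set.
- by apply/set0Pn; exists p; rewrite inE.
- by apply: contra_neq pq => Sp; apply/esym/set1P; rewrite Sp.
exact: le_trans (enorm_ge0 _) le_dl.
Qed.

End Connectivity.

Section Laplacian.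
Variables (R : realType) (n d : nat) (x : 'I_n -> 'rV[R]_d) (K : R -> R) (sigma : R).
Local Notation W := (affinity x K sigma).
Local Notation L := (laplacian x K sigma).

Lemma affinityC p q : W p q = W q p.
Proof. by rewrite !mxE enorm_distC. Qed.

Lemma laplacianE p q : L p q = (p == q)%:R * \sum_j W p j - W p q.
Proof.
rewrite !mxE; congr (_ - _).
by case: eqP => _; rewrite ?mulr1n ?mulr0n ?mul1r ?mul0r.
Qed.

Lemma laplacian_quad_form (f : 'I_n -> R) :
  \sum_p \sum_q f p * L p q * f q = 2^-1 * \sum_p \sum_q W p q * (f p - f q) ^+ 2.
Proof.
have row_form p : \sum_q f p * L p q * f q =
    \sum_q W p q * f p ^+ 2 - \sum_q W p q * (f p * f q).
  under eq_bigr do rewrite laplacianE mulrBr mulrBl.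
  rewrite sumrB; congr (_ - _); last by apply: eq_bigr => q _; ring.
  rewrite (bigD1 p) //= eqxx [\sum_(i | i != p) _]big1 ?addr0 => [|q qp].
    by rewrite mul1r mulr_sumr mulr_suml; apply: eq_bigr => q _; ring.
  by rewrite eq_sym (negbTE qp) mul0r mulr0 mul0r.
have swap : \sum_p \sum_q W p q * f q ^+ 2 = \sum_p \sum_q W p q * f p ^+ 2.
  by rewrite exchange_big; apply: eq_bigr => p _; apply: eq_bigr => q _; rewrite affinityC.
have expand : \sum_p \sum_q W p q * (f p - f q) ^+ 2 =
    \sum_p \sum_q W p q * f p ^+ 2 + \sum_p \sum_q W p q * f q ^+ 2
    - 2 * \sum_p \sum_q W p q * (f p * f q).
  rewrite -!big_split /= !mulr_sumr -sumrB; apply: eq_bigr => p _.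
  rewrite -big_split /= !mulr_sumr -sumrB; apply: eq_bigr => q _; ring.
under eq_bigr do rewrite row_form.
by rewrite sumrB expand swap; field.
Qed.

Variables (U : 'M[R]_n) (ev : 'rV[R]_n).
Hypotheses (UtU : U^T *m U = 1%:M) (LU : L *m U = U *m diag_mx ev).

Let UUt : U *m U^T = 1%:M := mulmx1C UtU.

Lemma mul_trU_col (f : 'I_n -> R) : U^T *m \col_p f p = \col_c \sum_p U p c * f p.
Proof. by apply/colP => c; rewrite !mxE; apply: eq_bigr => p _; rewrite !mxE. Qed.

Lemma laplacian_quad_form_eigen (f : 'I_n -> R) :
  \sum_p \sum_q f p * L p q * f q = \sum_c ev 0 c * (\sum_p U p c * f p) ^+ 2.
Proof.
set v := \col_p f p.
have L_diag : L = U *m diag_mx ev *m U^T by rewrite -LU -mulmxA UUt mulmx1.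
have : (v^T *m L *m v) 0 0 = \sum_c ev 0 c * (\sum_p U p c * f p) ^+ 2.
  have -> : v^T *m L *m v = (U^T *m v)^T *m diag_mx ev *m (U^T *m v).
    by rewrite L_diag trmx_mul trmxK !mulmxA.
  rewrite mul_trU_col mxE; apply: eq_bigr => c _.
  by rewrite mul_mx_diag !mxE expr2 mulrCA mulrA.
move <-; rewrite mxE exchange_big /=; apply: eq_bigr => q _.
by rewrite !mxE mulr_suml; apply: eq_bigr => p _; rewrite !mxE.
Qed.

Lemma sum_sqr_eigen (f : 'I_n -> R) : \sum_p f p ^+ 2 = \sum_c (\sum_p U p c * f p) ^+ 2.
Proof.
set v := \col_p f p.
have -> : \sum_p f p ^+ 2 = (v^T *m v) 0 0.
  by rewrite mxE; apply: eq_bigr => p _; rewrite !mxE expr2.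
have -> : v^T *m v = (U^T *m v)^T *m (U^T *m v).
  by rewrite trmx_mul trmxK mulmxA -(mulmxA _ U) UUt mulmx1.
by rewrite mul_trU_col mxE; apply: eq_bigr => c _; rewrite !mxE expr2.
Qed.

Lemma eigval_quad_form c : \sum_p \sum_q U p c * L p q * U q c = ev 0 c.
Proof.
have col_dot c' : \sum_p U p c' * U p c = (c' == c)%:R.
  have := congr1 (fun M : 'M[R]_(n, n) => M c' c) UtU; rewrite !mxE => <-.
  by apply: eq_bigr => p _; rewrite mxE.
rewrite laplacian_quad_form_eigen /= (bigD1 c) //= [\sum_(i | i != c) _]big1 => [|c' c'c].
  by rewrite col_dot eqxx expr1n mulr1 addr0.
by rewrite col_dot (negbTE c'c) expr0n mulr0.
Qed.

Lemma eigval_ge0 c : (forall p q, 0 <= W p q) -> 0 <= ev 0 c.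
Proof.
move=> W0; rewrite -eigval_quad_form laplacian_quad_form mulr_ge0 ?invr_ge0 ?ler0n //.
by apply: sumr_ge0 => p _; apply: sumr_ge0 => q _; rewrite mulr_ge0 ?sqr_ge0.
Qed.

Lemma affinity_eigvec_gap (c a b : 'I_n) : (forall p q, 0 <= W p q) ->
  W a b * (U a c - U b c) ^+ 2 <= ev 0 c.
Proof.
move=> W0; have [<-|ab] := eqVneq a b; first by rewrite subrr expr0n mulr0 eigval_ge0.
have T0 p q : 0 <= W p q * (U p c - U q c) ^+ 2 by rewrite mulr_ge0 ?sqr_ge0.
have := ler_pair_double_sum T0 ab.
rewrite -eigval_quad_form laplacian_quad_form affinityC -[U b c - U a c]opprB sqrrN.
lra.
Qed.

End Laplacian.

Lemma gram_separation (R : realFieldType) (u v N G H P : R) :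
  1 <= u -> 1 <= v -> u + v <= N ->
  (u * G - 1) ^+ 2 <= 16^-1 -> (v * H - 1) ^+ 2 <= 16^-1 -> u * v * P ^+ 2 <= 16^-1 ->
  2 / N <= G + H - 2 * P.
Proof.
move=> u1 v1 uvN uG vH uvP.
have uG34 : 3 / 4 <= u * G by rewrite expr2 in uG; nra.
have vH34 : 3 / 4 <= v * H by rewrite expr2 in vH; nra.
have amgm : 4 * (u * v) <= (u + v) ^+ 2 by have := sqr_ge0 (u - v); rewrite !expr2; lra.
have uvP8 : 8 * (u * v * P) <= u + v.
  have : (8 * (u * v * P)) ^+ 2 <= (u + v) ^+ 2.
    have -> : (8 * (u * v * P)) ^+ 2 = 64 * (u * v) * (u * v * P ^+ 2) by ring.
    have : 0 <= u * v by nra.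
    nra.
  rewrite !expr2; nra.
set Q := G + H - 2 * P.
have key : u + v <= 2 * (u * v) * Q by rewrite /Q; nra.
have uv0 : 0 < u * v by nra.
have Q0 : 0 <= Q by nra.
have Quv : 2 <= Q * (u + v).
  have uv_ge0 : 0 <= u + v by lra.
  have := ler_wpM2r uv_ge0 key; rewrite -expr2; nra.
rewrite ler_pdivrMr; last by lra.
by apply: le_trans Quv _; apply: ler_wpM2l.
Qed.

Section Separation.
Variables (R : realFieldType) (n k : nat) (V : 'M[R]_(n, k)).
Hypothesis VtV : V^T *m V = 1%:M.

Lemma row_sqr_le1 p : \sum_c V p c ^+ 2 <= 1.
Proof.
pose P := V *m V^T.
have Pidem : P *m P = P by rewrite /P mulmxA -(mulmxA V) VtV mulmx1.
have Psym q : P q p = P p q by rewrite !mxE; apply: eq_bigr => c _; rewrite !mxE mulrC.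
have Ppp : P p p = \sum_c V p c ^+ 2 by rewrite mxE; apply: eq_bigr => c _; rewrite mxE expr2.
have Prow : P p p = \sum_q P p q ^+ 2.
  by rewrite -{1}Pidem mxE; apply: eq_bigr => q _; rewrite Psym expr2.
have : P p p ^+ 2 <= P p p.
  by rewrite {2}Prow (bigD1 p) //= lerDl; apply: sumr_ge0 => q _; apply: sqr_ge0.
have : 0 <= P p p by rewrite Ppp; apply: sumr_ge0 => c _; apply: sqr_ge0.
rewrite -Ppp expr2; nra.
Qed.

Lemma frob_le_nrows : frob V <= n%:R.
Proof.
have -> : n%:R = \sum_(p < n) (1 : R) by rewrite sumr_const card_ord.
by apply: ler_sum => p _; apply: row_sqr_le1.
Qed.

Lemma frob_gram_perturb (X : 'M[R]_(n, k)) : frob X <= n%:R ->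
  frob (X^T *m X - 1%:M) <= 4 * n%:R * frob (X - V).
Proof.
move=> frobX; have e0 := frob_ge0 (X - V); have X0 := frob_ge0 X; have V0 := frob_ge0 V.
have -> : X^T *m X - 1%:M = (X - V)^T *m X + V^T *m (X - V).
  by rewrite -VtV linearB /= mulmxBl mulmxBr addrA subrK.
apply: le_trans (ler_frobD _ _) _.
have := ler_frob_mul (X - V)^T X; have := ler_frob_mul V^T (X - V); rewrite !frob_trmx.
have := ler_wpM2l e0 frobX; have := ler_wpM2r e0 frob_le_nrows; nra.
Qed.

Variables (lab : 'I_n -> 'I_k) (rho2 : R).
Hypothesis close : forall p q, lab p = lab q -> \sum_c (V p c - V q c) ^+ 2 <= rho2.

Definition cluster_size a : R := \sum_p (lab p == a)%:R.

Lemma cluster_size_ge0 a : 0 <= cluster_size a.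
Proof. by apply: sumr_ge0 => p _; apply: ler0n. Qed.

Section Representatives.
Variable rep : 'I_k -> 'I_n.
Hypothesis rep_lab : forall p, lab (rep (lab p)) = lab p.

Definition rep_gram a b := \sum_c V (rep a) c * V (rep b) c.

Definition gram_defect a b := cluster_size a * rep_gram a b - (a == b)%:R.

Lemma gram_defect_mul_ge0 a b : 0 <= gram_defect a b * gram_defect b a.
Proof.
rewrite /gram_defect; have [<-|ab] := eqVneq a b; first by rewrite -expr2 sqr_ge0.
have -> : rep_gram b a = rep_gram a b by apply: eq_bigr => c _; rewrite mulrC.
rewrite !subr0 mulrACA -expr2 mulr_ge0 ?sqr_ge0 //.
by rewrite mulr_ge0 ?cluster_size_ge0.
Qed.

Lemma cluster_gram_defect a b : gram_defect a b * gram_defect b a <= 4 * n%:R ^+ 2 * rho2.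
Proof.
pose H : 'M[R]_(n, k) := \matrix_(p, a) (lab p == a)%:R.
pose M : 'M[R]_k := \matrix_(a, c) V (rep a) c.
pose X := H *m M.
have XE p c : X p c = V (rep (lab p)) c.
  rewrite mxE (bigD1 (lab p)) //= big1 ?addr0 => [|l pl]; first by rewrite !mxE eqxx mul1r.
  by rewrite !mxE eq_sym (negbTE pl) mul0r.
have frob_err : frob (X - V) <= n%:R * rho2.
  have -> : n%:R * rho2 = \sum_(p < n) rho2 by rewrite sumr_const card_ord mulr_natl.
  apply: ler_sum => p _; under eq_bigr do rewrite mxE XE mxE.
  exact: close.
have frobX : frob X <= n%:R.
  have -> : n%:R = \sum_(p < n) (1 : R) by rewrite sumr_const card_ord.
  by apply: ler_sum => p _; under eq_bigr do rewrite XE; apply: row_sqr_le1.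
have frobF : frob (X^T *m X - 1%:M) <= 4 * n%:R ^+ 2 * rho2.
  apply: le_trans (frob_gram_perturb frobX) _.
  by rewrite expr2 -!mulrA ler_wpM2l // ler_wpM2l ?ler0n.
have HtHE l l' : (H^T *m H) l l' = (l == l')%:R * cluster_size l.
  rewrite mxE mulr_sumr; apply: eq_bigr => p _; rewrite !mxE.
  by case: (lab p =P l) => [->|_]; rewrite ?eqxx ?mul1r ?mulr1 ?mul0r ?mulr0.
pose B := H^T *m H *m M.
have defectE l l' : (B *m M^T - 1%:M) l l' = gram_defect l l'.
  rewrite !mxE /gram_defect /rep_gram mulr_sumr; congr (_ - _); apply: eq_bigr => c _.
  rewrite !mxE (bigD1 l) //= big1 ?addr0 => [|l'' l''l]; last first.
    by rewrite HtHE eq_sym (negbTE l''l) !mul0r.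
  by rewrite HtHE eqxx mul1r !mxE mulrA.
apply: le_trans frobF; rewrite -mxtrace_sqr_sym; last by rewrite linearB /= trmx_mul trmxK trmx1.
rewrite (_ : X^T *m X = M^T *m B); last by rewrite /B /X trmx_mul !mulmxA.
rewrite mxtrace_sqr_sub1C (_ : \tr _ = \sum_l \sum_l' gram_defect l l' * gram_defect l' l).
  exact: ler_term_double_sum gram_defect_mul_ge0.
by apply: eq_bigr => l _; rewrite mxE; apply: eq_bigr => l' _; rewrite !defectE.
Qed.

End Representatives.

Lemma rows_far_apart i j : 4 * n%:R ^+ 2 * rho2 <= 16^-1 -> lab i != lab j ->
  2 / n%:R <= \sum_c (V i c - V j c) ^+ 2.
Proof.
move=> small ij.
pose rep l := if l == lab i then i else if l == lab j then j else odflt i [pick p | lab p == l].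
have rep_lab p : lab (rep (lab p)) = lab p.
  rewrite /rep; case: eqP => [->//|_]; case: eqP => [->//|_].
  by case: pickP => [q /eqP //|/(_ p)]; rewrite eqxx.
have repi : rep (lab i) = i by rewrite /rep eqxx.
have repj : rep (lab j) = j by rewrite /rep eq_sym (negbTE ij) eqxx.
have Dii := cluster_gram_defect rep_lab (lab i) (lab i).
have Djj := cluster_gram_defect rep_lab (lab j) (lab j).
have Dij := cluster_gram_defect rep_lab (lab i) (lab j).
have ji : (lab j == lab i) = false by rewrite eq_sym (negbTE ij).
rewrite /gram_defect /rep_gram repi eqxx -expr2 in Dii.
rewrite /gram_defect /rep_gram repj eqxx -expr2 in Djj.
rewrite /gram_defect /rep_gram repi repj (negbTE ij) ji !subr0 in Dij.
have size_ge1 p : 1 <= cluster_size (lab p).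
  by rewrite /cluster_size (bigD1 p) //= eqxx lerDl; apply: sumr_ge0 => q _; apply: ler0n.
have size_sum : cluster_size (lab i) + cluster_size (lab j) <= n%:R.
  have -> : n%:R = \sum_(p < n) (1 : R) by rewrite sumr_const card_ord.
  rewrite -big_split /=; apply: ler_sum => p _.
  case: (lab p =P lab i) => [->|_]; first by rewrite (negbTE ij) addr0.
  by rewrite add0r; case: (_ == _).
have sum_sqr : \sum_c (V i c - V j c) ^+ 2 =
    \sum_c V i c * V i c + \sum_c V j c * V j c - 2 * \sum_c V i c * V j c.
  rewrite mulr_sumr -big_split /= -sumrB; apply: eq_bigr => c _; ring.
rewrite sum_sqr; apply: gram_separation (size_ge1 i) (size_ge1 j) size_sum _ _ _.
- exact: le_trans Dii small.
- exact: le_trans Djj small.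
have Pji : \sum_c V j c * V i c = \sum_c V i c * V j c.
  by apply: eq_bigr => c _; rewrite mulrC.
by rewrite Pji mulrACA -expr2 in Dij; apply: le_trans Dij small.
Qed.

End Separation.

Section ClusterEigen.
Variables (R : realType) (n d k : nat) (x : 'I_n -> 'rV[R]_d) (K : R -> R) (sigma : R).
Variables (U : 'M[R]_n) (ev : 'rV[R]_n) (lab : 'I_n -> 'I_k).
Local Notation W := (affinity x K sigma).
Hypotheses (UtU : U^T *m U = 1%:M) (LU : laplacian x K sigma *m U = U *m diag_mx ev)
  (ev_sorted : forall i j : 'I_n, (i <= j)%N -> ev 0 i <= ev 0 j)
  (W0 : forall p q, 0 <= W p q).

Lemma eigvec_cluster_bound (C : {set 'I_n}) (dl w : R) (c : 'I_n) :
  connected_at x C dl -> 0 < w ->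
  (forall p q, p \in C -> q \in C -> enorm (x p - x q) <= dl -> w <= W p q) ->
  forall p q, p \in C -> q \in C ->
    `|U p c - U q c| <= (#|C|.-1)%:R * Num.sqrt (ev 0 c / w).
Proof.
move=> connC w0 edge.
apply: connected_lipschitz_bound (sqrtr_ge0 _) (connected_at_edge connC) _ => p q pC qC pq.
rewrite -sqrtr_sqr ler_wsqrtr // ler_pdivlMr // mulrC.
exact: le_trans (ler_wpM2r (sqr_ge0 _) (edge _ _ pC qC pq)) (affinity_eigvec_gap UtU LU c p q W0).
Qed.

Lemma cluster_test_vector : (forall l, exists p, lab p = l) -> (0 < k)%N ->
  exists2 a : 'I_k -> R, 0 < \sum_p a (lab p) ^+ 2 &
    forall c : 'I_n, (c < k.-1)%N -> \sum_p U p c * a (lab p) = 0.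
Proof.
move=> lab_surj k0.
have lek : (k.-1 <= n)%N.
  by rewrite (leq_trans (leq_pred k)) //; have := surj_card_le lab_surj; rewrite !card_ord.
pose B : 'M[R]_(k, k.-1) := \matrix_(l, c) \sum_p (lab p == l)%:R * U p (widen_ord lek c).
have [a a0 aB] : exists2 a : 'rV_k, a != 0 & a *m B = 0.
  by apply: exists_nonzero_left_kernel; rewrite ltn_predL.
exists (a 0) => [|c ck].
  have /rV0Pn[l al] := a0; have [p pl] := lab_surj l.
  apply: (@lt_le_trans _ _ (a 0 (lab p) ^+ 2)); first by rewrite exprn_even_gt0 //= pl.
  by rewrite (bigD1 p) //= lerDl sumr_ge0 // => q _; rewrite sqr_ge0.
have := congr1 (fun v : 'rV_(k.-1) => v 0 (Ordinal ck)) aB.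
rewrite !mxE => aB0; apply: eq_trans aB0; under [RHS]eq_bigr do rewrite mxE mulr_sumr.
rewrite exchange_big; apply: eq_bigr => p _.
rewrite (bigD1 (lab p)) //= big1 => [|l pl]; last by rewrite eq_sym (negbTE pl) mul0r mulr0.
by rewrite eqxx mul1r addr0 mulrC; congr (_ * U p _); apply: val_inj.
Qed.

Lemma eigval_le_cross (b : R) : (forall l, exists p, lab p = l) -> 0 <= b ->
  (forall p q, lab p != lab q -> W p q <= b) ->
  forall c : 'I_n, (c < k)%N -> ev 0 c <= n%:R * b.
Proof.
move=> lab_surj b0 cross c ck.
have k0 : (0 < k)%N by apply: leq_ltn_trans ck.
have [a f_pos coef0] := cluster_test_vector lab_surj k0.
pose f p := a (lab p).
have kn1 : (k.-1 < n)%N by rewrite prednK //; have := surj_card_le lab_surj; rewrite !card_ord.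
have lower : ev 0 (Ordinal kn1) * \sum_p f p ^+ 2 <=
    \sum_p \sum_q f p * laplacian x K sigma p q * f q.
  rewrite (laplacian_quad_form_eigen UtU LU) (sum_sqr_eigen UtU) mulr_sumr.
  apply: ler_sum => c' _; have [c'k|kc'] := ltnP c' k.-1.
    by rewrite coef0 // expr0n /= !mulr0.
  by rewrite ler_wpM2r ?sqr_ge0 // ev_sorted.
have upper : \sum_p \sum_q f p * laplacian x K sigma p q * f q <= n%:R * b * \sum_p f p ^+ 2.
  rewrite laplacian_quad_form.
  have : \sum_p \sum_q W p q * (f p - f q) ^+ 2 <= b * \sum_p \sum_q (f p - f q) ^+ 2.
    rewrite mulr_sumr; apply: ler_sum => p _; rewrite mulr_sumr; apply: ler_sum => q _.
    have [pq|pq] := eqVneq (lab p) (lab q); first by rewrite /f pq subrr expr0n /= !mulr0.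
    by rewrite ler_wpM2r ?sqr_ge0 ?cross.
  rewrite sum_sqr_diff card_ord.
  have := ler_wpM2l b0 (sqr_ge0 (\sum_p f p)); nra.
have := le_trans lower upper; rewrite ler_pM2r // => evk.
by apply: le_trans evk; apply: ev_sorted; rewrite /= -ltnS prednK.
Qed.

Lemma eigvec_rows_close (deltas : 'I_k -> R) (w b : R) :
  (forall l, exists p, lab p = l) ->
  (forall l, connected_at x (finset [pred i | lab i == l]) (deltas l)) ->
  0 < w -> 0 <= b ->
  (forall p q, lab p = lab q -> enorm (x p - x q) <= deltas (lab p) -> w <= W p q) ->
  (forall p q, lab p != lab q -> W p q <= b) ->
  forall p q, lab p = lab q ->
    \sum_(c < n | (c < k)%N) (U p c - U q c) ^+ 2 <= k%:R * n%:R ^+ 3 * (b / w).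
Proof.
move=> lab_surj conn w0 b0 edge cross p q pq.
have kn : (k <= n)%N by have := surj_card_le lab_surj; rewrite !card_ord.
rewrite (big_ord_narrow kn).
have -> : k%:R * n%:R ^+ 3 * (b / w) = \sum_(c < k) n%:R ^+ 2 * (n%:R * (b / w)).
  by rewrite sumr_const card_ord -mulr_natl; ring.
apply: ler_sum => c _; set c' := widen_ord kn c.
set C := finset [pred i | lab i == lab p].
have pC : p \in C by rewrite inE /=.
have qC : q \in C by rewrite inE /= pq.
have edgeC a a' : a \in C -> a' \in C -> enorm (x a - x a') <= deltas (lab p) -> w <= W a a'.
  by rewrite !inE => /eqP ap /eqP a'p dl; apply: edge; rewrite ?ap ?a'p.
have := @eigvec_cluster_bound C _ w c' (conn (lab p)) w0 edgeC p q pC qC.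
have evw0 : 0 <= ev 0 c' / w by rewrite divr_ge0 ?(eigval_ge0 UtU LU _ W0) ?ltW.
move=> /(lerXn2r 2 (normr_ge0 _) (mulr_ge0 (ler0n _ _) (sqrtr_ge0 _))).
rewrite real_normK ?num_real // exprMn sqr_sqrtr // => /le_trans; apply.
apply: ler_pM => //.
- rewrite lerXn2r ?nnegrE ?ler0n // ler_nat (leq_trans (leq_pred _)) //.
  by have := max_card C; rewrite card_ord.
rewrite mulrA ler_wpM2r ?invr_ge0 ?(ltW w0) //.
exact: eigval_le_cross lab_surj b0 cross c' (ltn_ord c).
Qed.

End ClusterEigen.

Section Kernel.
Variables (R : realType) (K : R -> R) (A alpha : R).
Hypotheses (K_AK1 : AK1 K) (K_AK3 : AK3 K A alpha).

Lemma AK3_ge1 : 1 <= A.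
Proof.
have [_ K_pos] := K_AK1; have [_ [alpha0 ratio]] := K_AK3.
have := ratio 0 0 (lexx 0) (lexx 0).
by rewrite divff ?gt_eqF ?K_pos // subrr powR0 ?gt_eqF // oppr0 expR0 mulr1.
Qed.

Lemma kernel_tail_le (sigma P d0 dm e : R) :
  0 < sigma -> 0 <= dm -> 1 < A * P ->
  sigma < d0 * ln (A * P) `^ (- alpha^-1) -> d0 + dm <= e ->
  K (e / sigma) <= P^-1 * K (dm / sigma).
Proof.
move=> sigma0 dm0 AP1 sigma_lt gap.
have [_ K_pos] := K_AK1; have [A0 [alpha0 ratio]] := K_AK3.
have P0 : 0 < P by rewrite -(pmulr_rgt0 _ A0); apply: lt_trans AP1.
set ell := ln (A * P).
have ell0 : 0 < ell by rewrite ln_gt0.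
set L := ell `^ alpha^-1.
have L0 : 0 < L by apply: powR_gt0.
have sigmaL : sigma * L < d0 by move: sigma_lt; rewrite powRN -/L ltr_pdivlMr.
have L_le : L <= e / sigma - dm / sigma by rewrite -mulrBl ler_pdivlMr // mulrC; lra.
have ell_le : ell <= (e / sigma - dm / sigma) `^ alpha.
  have -> : ell = L `^ alpha by rewrite /L -powRrM mulVf ?gt_eqF // powRr1 // ltW.
  by apply: ge0_ler_powR; rewrite ?nnegrE ?(ltW alpha0) ?(ltW L0) //; lra.
have dms0 : 0 <= dm / sigma by exact: divr_ge0 dm0 (ltW sigma0).
have dm_le_e : dm / sigma <= e / sigma.
  by rewrite ler_pM2r ?invr_gt0 //; have := mulr_gt0 sigma0 L0; lra.
have := ratio _ _ dms0 dm_le_e; rewrite ler_pdivrMr ?K_pos //.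
move/le_trans; apply; rewrite ler_pM2r ?K_pos //.
have -> : P^-1 = A * expR (- ell).
  by rewrite expRN lnK ?posrE ?(lt_trans ltr01) // invfM mulVKf ?gt_eqF.
by rewrite ler_wpM2l ?(ltW A0) // ler_expR lerN2.
Qed.

End Kernel.

Lemma cluster_gap (R : realType) n d k (x : 'I_n -> 'rV[R]_d) (lab : 'I_n -> 'I_k)
    (deltas : 'I_k -> R) (delta : \bar R) :
  (0 < k)%N ->
  delta = (\big[Order.min/+oo%E]_(m < k)
              set_dist x (finset [pred i | lab i == m]) (finset [pred i | lab i != m])
           - \big[Order.max/-oo%E]_(l < k) (deltas l)%:E)%E ->
  (0 < delta)%E ->
  exists dm : R, (forall l, deltas l <= dm) /\
    forall p q, lab p != lab q -> exists2 d0 : R, delta = d0%:E & d0 + dm <= enorm (x p - x q).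
Proof.
move=> k0 deltaE delta0.
have le_max l := le_bigmax -oo%E (fun l => (deltas l)%:E) l.
have [l0 _ maxE] := eq_bigmax (x := -oo%E) (Ordinal k0) xpredT (fun l => (deltas l)%:E) isT
  (fun _ _ => leNye _).
rewrite maxE in le_max deltaE; exists (deltas l0); split => [l|p q pq]; first by rewrite -lee_fin.
have delta_le : (delta <= (enorm (x p - x q) - deltas l0)%:E)%E.
  rewrite deltaE EFinB leeB // (le_trans (bigmin_le _ (lab p) _)) //.
  by apply: set_dist_le_enorm; rewrite inE /= ?eqxx // eq_sym.
have delta_fin : delta \is a fin_num.
  apply: fin_real; apply/andP; split; first exact: lt_trans (ltNyr 0) delta0.
  exact: le_lt_trans delta_le (ltry _).
exists (fine delta); first by rewrite fineK.
by move: delta_le; rewrite -{1}(fineK delta_fin) lee_fin; lra.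
Qed.

Lemma rate_bounds (R : realType) (n k : nat) (z : R) :
  (0 < k)%N -> 81 * k%:R ^+ 15 <= n%:R `^ (z - 15) -> (2 <= n)%N /\ 15 < z.
Proof.
move=> k0 rate; have k15 : 1 <= k%:R ^+ 15 :> R by rewrite exprn_ege1 // ler1n.
have n2 : (2 <= n)%N.
  rewrite leqNgt; apply/negP => n1; suff : n%:R `^ (z - 15) <= 1 :> R by lra.
  case: (n) n1 => [|[|]] // _; last by rewrite powR1.
  by have [->|z15] := eqVneq (z - 15) 0; rewrite ?powRr0 ?powR0.
split => //; rewrite ltNge; apply/negP => z15.
have : n%:R `^ (z - 15) <= n%:R `^ 0 :> R by apply: ler_powR; rewrite ?ler1n ?(ltnW n2); lra.
rewrite powRr0; lra.
Qed.

Section Rates.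
Variables (R : realType) (n k : nat) (z : R).
Hypothesis n0 : (0 < n)%N.

Lemma powR_sub_nat (m : nat) : n%:R `^ (z - m%:R) = n%:R `^ z / n%:R ^+ m :> R.
Proof. by rewrite powRB ?powR_mulrn ?ler0n // pnatr_eq0 -lt0n n0 implybT. Qed.

Lemma powR_third_cube : (n%:R `^ (z / 3)) ^+ 3 = n%:R `^ z :> R.
Proof. by rewrite -powR_mulrn ?powR_ge0 // -powRrM; congr (_ `^ _); field. Qed.

Lemma within_rate :
  (k%:R ^+ 3 / n%:R `^ (z - 9)) `^ (6^-1) = Num.sqrt (k%:R * n%:R ^+ 3 / n%:R `^ (z / 3)) :> R.
Proof.
set P := n%:R `^ (z / 3); have P0 : 0 < P by rewrite powR_gt0 ?ltr0n.
have rho0 : 0 <= k%:R * n%:R ^+ 3 / P by rewrite divr_ge0 ?mulr_ge0 ?exprn_ge0 ?ler0n ?ltW.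
have -> : k%:R ^+ 3 / n%:R `^ (z - 9) = (k%:R * n%:R ^+ 3 / P) ^+ 3.
  by rewrite powR_sub_nat -powR_third_cube -/P; field; rewrite !gt_eqF ?ltr0n.
by rewrite -powR_mulrn // -powRrM -powR12_sqrt //; congr (_ `^ _); field.
Qed.

Lemma between_rate_nonpos : (2 <= n)%N -> (0 < k)%N ->
  16^-1 < 4 * n%:R ^+ 2 * (k%:R * n%:R ^+ 3 / n%:R `^ (z / 3)) ->
  Num.sqrt (2 / n%:R) - 6 * (k%:R ^+ 27 / n%:R `^ (z - 15)) `^ (24^-1) <= 0 :> R.
Proof.
move=> n2 k0; set P := n%:R `^ (z / 3); have P0 : 0 < P by rewrite powR_gt0 ?ltr0n.
set B := k%:R ^+ 27 / n%:R `^ (z - 15); set t := 64 * k%:R * n%:R ^+ 5 / P.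
have -> : 4 * n%:R ^+ 2 * (k%:R * n%:R ^+ 3 / P) = t / 16 by rewrite /t; field; rewrite gt_eqF.
move=> big_t; have t1 : 1 < t by lra.
have B0 : 0 <= B by rewrite divr_ge0 ?exprn_ge0 ?ler0n ?powR_ge0.
have B_ge : (2^-1) ^+ 24 <= B.
  have -> : B = k%:R ^+ 24 * t ^+ 3 / 64 ^+ 3.
    by rewrite /B /t powR_sub_nat -powR_third_cube -/P; field; rewrite !gt_eqF ?ltr0n.
  have kt : 1 <= k%:R ^+ 24 * t ^+ 3 by rewrite mulr_ege1 // exprn_ege1 ?ler1n // ltW.
  rewrite ler_pdivlMr ?exprn_gt0 //; apply: le_trans kt.
  rewrite exprVn mulrC ler_pdivrMr ?exprn_gt0 // mul1r.
  have -> : 64 = 2 ^+ 6 :> R by rewrite -natrX.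
  by rewrite -exprM ler_eXn2l // ltr1n.
have beta_ge : 2^-1 <= B `^ (24^-1).
  rewrite -(ler_pXn2r (isT : (0 < 24)%N)) ?nnegrE ?powR_ge0 ?invr_ge0 //.
  by rewrite -[X in _ <= X]powR_mulrn ?powR_ge0 // -powRrM mulVf ?powRr1.
have : Num.sqrt (2 / n%:R) <= 1 :> R.
  rewrite -[X in _ <= X]sqrtr1 ler_wsqrtr //.
  by rewrite ler_pdivrMr ?ltr0n // mul1r ler_nat.
lra.
Qed.

End Rates.

Lemma row_dist_sep (R : realType) n k (U : 'M[R]_n) (lab : 'I_n -> 'I_k) (rho : R) :
  (k <= n)%N -> U^T *m U = 1%:M ->
  (forall p q, lab p = lab q -> \sum_(c < n | (c < k)%N) (U p c - U q c) ^+ 2 <= rho) ->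
  4 * n%:R ^+ 2 * rho <= 16^-1 ->
  forall i j, lab i != lab j -> Num.sqrt (2 / n%:R) <= row_dist U k i j.
Proof.
move=> kn UtU close small i j ij.
pose V : 'M[R]_(n, k) := \matrix_(p, c) U p (widen_ord kn c).
have sumV p q : \sum_(c < n | (c < k)%N) (U p c - U q c) ^+ 2 = \sum_c (V p c - V q c) ^+ 2.
  by rewrite (big_ord_narrow kn); apply: eq_bigr => c _; rewrite !mxE.
have VtV : V^T *m V = 1%:M.
  apply/matrixP => c c'.
  have := congr1 (fun M : 'M[R]_(n, n) => M (widen_ord kn c) (widen_ord kn c')) UtU.
  by rewrite !mxE => <-; apply: eq_bigr => p _; rewrite !mxE.
rewrite /row_dist sumV; apply/ler_wsqrtr/(rows_far_apart VtV _ small ij).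
by move=> p q /close; rewrite sumV.
Qed.

Section WithinClusters.
Variables (R : realType) (K : R -> R) (A alpha : R) (d n k : nat) (x : 'I_n -> 'rV[R]_d).
Variables (lab : 'I_n -> 'I_k) (deltas : 'I_k -> R) (delta : \bar R) (sigma : R).
Variables (U : 'M[R]_n) (ev : 'rV[R]_n).
Hypotheses (K_AK1 : AK1 K) (K_AK3 : AK3 K A alpha)
  (lab_surj : forall l, exists p, lab p = l)
  (conn : forall l, connected_at x (finset [pred i | lab i == l]) (deltas l))
  (sigma0 : 0 < sigma)
  (UtU : U^T *m U = 1%:M) (LU : laplacian x K sigma *m U = U *m diag_mx ev)
  (ev_sorted : forall i j : 'I_n, (i <= j)%N -> ev 0 i <= ev 0 j).

Lemma rows_close (P dm : R) : 1 < A * P ->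
  (sigma%:E < delta * (ln (A * P) `^ (- alpha^-1))%:E)%E ->
  (forall l, deltas l <= dm) ->
  (forall p q, lab p != lab q -> exists2 d0 : R, delta = d0%:E & d0 + dm <= enorm (x p - x q)) ->
  forall p q, lab p = lab q ->
    \sum_(c < n | (c < k)%N) (U p c - U q c) ^+ 2 <= k%:R * n%:R ^+ 3 / P.
Proof.
move=> AP1 sigma_lt dm_max gap p q pq.
have [K_mono K_pos] := K_AK1; have [A0 _] := K_AK3.
have P0 : 0 < P by rewrite -(pmulr_rgt0 _ A0); apply: lt_trans AP1.
have [<-|pnq] := eqVneq p q.
  rewrite big1 => [|c _]; last by rewrite subrr expr0n.
  by rewrite divr_ge0 ?mulr_ge0 ?exprn_ge0 ?ler0n ?ltW.
(* K is only controlled on [0, +oo): dm >= 0 holds once the cluster has two points. *)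
have dm0 : 0 <= dm.
  have pC : p \in finset [pred i | lab i == lab p] by rewrite inE /=.
  have qC : q \in finset [pred i | lab i == lab p] by rewrite inE /= pq.
  exact: le_trans (connected_at_ge0 (@conn (lab p)) pC qC pnq) (dm_max _).
have scaled0 e : 0 <= e -> 0 <= e / sigma by move=> e0; exact: divr_ge0 e0 (ltW sigma0).
set w := K (dm / sigma).
have w0 : 0 < w by rewrite K_pos ?scaled0.
have W0 a b : 0 <= affinity x K sigma a b by rewrite mxE ltW ?K_pos ?scaled0 ?enorm_ge0.
have edge a b : lab a = lab b -> enorm (x a - x b) <= deltas (lab a) -> w <= affinity x K sigma a b.
  move=> _ le_dl; rewrite mxE K_mono ?scaled0 ?enorm_ge0 // ler_pM2r ?invr_gt0 //.
  exact: le_trans le_dl (dm_max _).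
have cross a b : lab a != lab b -> affinity x K sigma a b <= P^-1 * w.
  move=> ab; have [d0 dE gap_ab] := gap a b ab; rewrite mxE /w.
  move: sigma_lt; rewrite dE -EFinM lte_fin => sigma_lt.
  exact: (kernel_tail_le K_AK1 K_AK3 sigma0 dm0 AP1 sigma_lt gap_ab).
have := eigvec_rows_close UtU LU ev_sorted W0 lab_surj conn w0 _ edge cross pq.
by rewrite mulfK ?gt_eqF //; apply; rewrite mulr_ge0 ?invr_ge0 ?ltW.
Qed.

End WithinClusters.

Theorem lemma12 (R : realType) (K : R -> R) (A alpha : R) (d n k : nat)
  (x : 'I_n -> 'rV[R]_d) (lab : 'I_n -> 'I_k) (deltas : 'I_k -> R)
  (delta : \bar R) (sigma z : R) (U : 'M[R]_n) :
  AK1 K -> AK2 d K -> AK3 K A alpha ->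
  injective x ->
  (forall l : 'I_k, exists i : 'I_n, lab i = l) ->
  (forall l : 'I_k, connected_at x (finset [pred i | lab i == l]) (deltas l)) ->
  delta = (\big[Order.min/+oo%E]_(m < k)
              set_dist x (finset [pred i | lab i == m]) (finset [pred i | lab i != m])
           - \big[Order.max/-oo%E]_(l < k) (deltas l)%:E)%E ->
  (0 < delta)%E ->
  (n%:R `^ (z - 15) >= 81 * k%:R ^+ 15) ->
  0 < sigma ->
  (sigma%:E < delta * (ln (A * n%:R `^ (z / 3)) `^ (- alpha^-1))%:E)%E ->
  eigvec_matrix (laplacian x K sigma) U ->
  (forall i j : 'I_n, lab i = lab j ->
     row_dist U k i j <= (k%:R ^+ 3 / n%:R `^ (z - 9)) `^ (6^-1)) /\
  (forall i j : 'I_n, lab i != lab j ->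
     row_dist U k i j >= Num.sqrt (2 / n%:R)
                         - 6 * (k%:R ^+ 27 / n%:R `^ (z - 15)) `^ (24^-1)).
Proof.
move=> K_AK1 _ K_AK3 _ lab_surj conn deltaE delta0 rate sigma0 sigma_lt [ev [UtU LU ev_sorted]].
have [n0|n_pos] := posnP n; first by split => i; have := ltn_ord i; rewrite {2}n0.
have k0 : (0 < k)%N by case: (lab (Ordinal n_pos)) => l /(leq_ltn_trans (leq0n l)).
have kn : (k <= n)%N by have := surj_card_le lab_surj; rewrite !card_ord.
have [n2 z15] := rate_bounds k0 rate.
set P := n%:R `^ (z / 3).
have AP1 : 1 < A * P.
  have P2 : 2 <= P.
    apply: (@le_trans _ _ (n%:R `^ 1)); first by rewrite powRr1 ?ler0n // ler_nat.
    by apply: ler_powR; rewrite ?ler1n ?(ltnW n2) //; lra.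
  have := AK3_ge1 K_AK1 K_AK3; nra.
have [dm [dm_max gap]] := cluster_gap k0 deltaE delta0.
have close := rows_close K_AK1 K_AK3 lab_surj conn sigma0 UtU LU ev_sorted AP1 sigma_lt dm_max gap.
split => i j ij.
  by rewrite within_rate // /row_dist; apply/ler_wsqrtr/close.
have [small|big] := leP (4 * n%:R ^+ 2 * (k%:R * n%:R ^+ 3 / P)) 16^-1.
  apply: le_trans (row_dist_sep kn UtU close small ij).
  by rewrite gerBl mulr_ge0 ?powR_ge0.
exact: le_trans (between_rate_nonpos n_pos n2 k0 big) (sqrtr_ge0 _).
Qed.
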